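(* Let $R$ be an associative ring with identity and involution $*$, and let $a\in R^{\#}\cap R^{\dagger}$. Then $a\in R^{SEP}$ if and only if, for both $k=2$ and $k=3$, $(a(a^{\#})^*a^{\dagger})^k$ is a left $(a^{\dagger}a^2)^k$-idempotent, i.e. $\big((a(a^{\#})^*a^{\dagger})^k\big)^2=(a^{\dagger}a^2)^k(a(a^{\#})^*a^{\dagger})^k$.
   Context: An involution on $R$ is a map $x\mapsto x^*$ with $(x^* )^*=x$, $(x+y)^*=x^*+y^*$, $(xy)^*=y^*x^*$. An element $a$ is Moore–Penrose invertible if there is $b$ with $aba=a$, $bab=b$, $(ab)^*=ab$, $(ba)^*=ba$; such $b$ is unique, denoted $a^{\dagger}$, and $R^{\dagger}$ is the set of such $a$. An element $a$ is group invertible if there is $b$ with $aba=a$, $bab=b$, $ab=ba$; such $b$ is unique, denoted $a^{\#}$, and $R^{\#}$ is the set of such $a$. For $a\in R^{\#}\cap R^{\dagger}$, $a$ is SEP if $a^*=a^{\dagger}=a^{\#}$; $R^{SEP}$ denotes the set of SEP elements. For $e,c\in R$, $e$ is a left $c$-idempotent if $e^2=ce$. *)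

From mathcomp Require Import all_boot all_algebra.
Set Implicit Arguments. Unset Strict Implicit. Unset Printing Implicit Defensive.
Import GRing.Theory.
Local Open Scope ring_scope.

Definition is_involution (R : pzRingType) (inv : R -> R) : Prop :=
  (forall x, inv (inv x) = x) /\
  (forall x y, inv (x + y) = inv x + inv y) /\
  (forall x y, inv (x * y) = inv y * inv x).

Definition is_MP_inverse (R : pzRingType) (st : R -> R) (a b : R) : Prop :=
  [/\ a * b * a = a, b * a * b = b, st (a * b) = a * b & st (b * a) = b * a].

Definition is_group_inverse (R : pzRingType) (a b : R) : Prop :=
  [/\ a * b * a = a, b * a * b = b & a * b = b * a].

(* a is SEP: a^* = a^dagger = a^#, given ad = a^dagger and ag = a^#. *)
Definition is_SEP (R : pzRingType) (st : R -> R) (a ad ag : R) : Prop :=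
  st a = ad /\ ad = ag.

Definition left_c_idempotent (R : pzRingType) (c e : R) : Prop :=
  e ^+ 2 = c * e.

(* Write q := (a^#)^*, the group inverse of a^*.  Since a^† a q = q, the powers collapse:
   (a q a^†)^k = a q^k a^† and (a^† a^2)^k = a^† a^(k+1).  Multiplying the k-th condition on
   the right by a a^* and using q^2 a^* = q turns it into a q^(2k-1) = a^† a^(k+2) q^(k-1).
   Multiplied on the left by a, the cases k = 2 and k = 3 give a^6 q = a^5 q^2, hence
   a^2 q = a q^2 after cancelling powers of the group invertible a.  Fed back into k = 2 this
   yields a = a^† a^2, so a a^# = a^† a is hermitian and q = q^2 a^* = a q a^* = a (a a^#)^* = a.
   Thus a^* = a^#, which then satisfies the Moore-Penrose equations and equals a^† by
   uniqueness.  Conversely, if a^* = a^† = a^#, both sides of every condition reduce to a^(2k). *)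

From mathcomp Require Import all_boot all_algebra.
Import GRing.Theory.
Set Implicit Arguments.
Local Open Scope ring_scope.

Section GroupInverse.
Variables (R : pzRingType) (a g : R).
Hypothesis ag : is_group_inverse a g.

Lemma ginv_mulKl : g * a * a = a.
Proof. by case: ag => ? _ aC; rewrite -aC. Qed.

Lemma ginv_mulKr : a * a * g = a.
Proof. by case: ag => ? _ aC; rewrite -mulrA aC mulrA. Qed.

Lemma ginv_sqr_mull : g * g * a = g.
Proof. by case: ag => _ ? aC; rewrite -mulrA -aC mulrA. Qed.

Lemma ginv_sqr_mulr : a * g * g = g.
Proof. by case: ag => _ ? ->. Qed.

Lemma ginv_exprS_mulr n : g ^+ n.+2 * a = g ^+ n.+1.
Proof. by rewrite 2!exprSr -2!mulrA [g * (g * a)]mulrA ginv_sqr_mull -exprSr. Qed.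

Lemma ginv_cancel_exprl {n} {x y : R} : a ^+ n.+1 * x = a ^+ n.+1 * y -> a * x = a * y.
Proof.
elim: n => [|n IHn] // axy; apply: IHn.
have gaS m : g * a ^+ m.+2 = a ^+ m.+1 by rewrite !exprS !mulrA ginv_mulKl.
by rewrite -gaS -mulrA axy mulrA.
Qed.

Lemma ginv_cancel_exprr {n} {x y : R} : x * a ^+ n.+1 = y * a ^+ n.+1 -> x * a = y * a.
Proof.
elim: n => [|n IHn] // xay; apply: IHn.
have aSg m : a ^+ m.+2 * g = a ^+ m.+1.
  by rewrite -addn2 exprD expr2 -mulrA ginv_mulKr -exprSr.
by rewrite -aSg mulrA xay -mulrA.
Qed.

End GroupInverse.

Lemma expr_inner_inv_mul_sqr (R : pzRingType) (a d : R) n :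
  a * d * a = a -> (d * a ^+ 2) ^+ n.+1 = d * a ^+ n.+2.
Proof.
move=> ada; elim: n => [|n IHn]; first by rewrite expr1.
have adaE x : x * a * d * a = x * a by rewrite -{3}ada !mulrA.
by rewrite exprS IHn (exprS a n.+1) [a ^+ 2]expr2 ![in LHS]mulrA adaE -!mulrA -!exprS.
Qed.

Lemma expr_sandwich (R : pzRingType) (a d q : R) n :
  d * a * q = q -> (a * q * d) ^+ n.+1 = a * q ^+ n.+1 * d.
Proof.
move=> daq; elim: n => [|n IHn]; first by rewrite !expr1.
have daqE x : x * d * a * q = x * q by rewrite -{2}daq !mulrA.
by rewrite exprSr IHn ![in LHS]mulrA daqE -(mulrA a) -exprSr.
Qed.

Section Involution.
Variables (R : pzRingType) (st : R -> R).
Hypothesis invst : is_involution st.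

Lemma group_inverse_adjoint (a g : R) :
  is_group_inverse a g -> is_group_inverse (st a) (st g).
Proof.
case: invst => _ [_ stM] [aga gag ag_ga].
by split; rewrite -!stM ?mulrA ?aga ?gag ?ag_ga.
Qed.

Section MoorePenrose.
Variables (a d : R).
Hypothesis ad : is_MP_inverse st a d.

Lemma MP_mul_adj : d * a * st a = st a.
Proof.
case: invst => _ [_ stM]; case: ad => ada _ _ da_herm.
by rewrite -{3}ada -(mulrA a) stM da_herm.
Qed.

Lemma adj_mul_adj_MP : st a * st d = d * a.
Proof. by case: invst => _ [_ stM]; case: ad => _ _ _ da_herm; rewrite -stM. Qed.

Lemma MP_inverse_unique (b : R) : is_MP_inverse st a b -> b = d.
Proof.
case: invst => _ [_ stM]; case: ad => ada dad ad_herm da_herm.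
case=> aba bab ab_herm ba_herm.
have abE : a * b = a * d.
  by rewrite -ab_herm -{1}ada -mulrA stM ab_herm ad_herm mulrA aba.
have baE : b * a = d * a.
  rewrite -ba_herm -{1}ada !mulrA -(mulrA (b * a)) stM da_herm ba_herm.
  by rewrite -!mulrA (mulrA a b) aba.
by rewrite -bab baE -mulrA abE mulrA dad.
Qed.

Lemma MP_mull_expr n (x : R) : a * (d * a ^+ n.+1 * x) = a ^+ n.+1 * x.
Proof. by case: ad => ada _ _ _; rewrite exprS !mulrA ada. Qed.

Lemma MP_expr_mulr n : a ^+ n.+1 * (d * a) = a ^+ n.+1.
Proof. by case: ad => ada _ _ _; rewrite exprSr -mulrA (mulrA a) ada. Qed.

Lemma left_c_idempotent_mulr_adj m (Q : R) :
  d * a * Q = Q -> left_c_idempotent (d * a ^+ m.+1) (a * Q * d) ->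
  a * Q * Q * st a = d * a ^+ m.+2 * Q * st a.
Proof.
move=> daQ; rewrite /left_c_idempotent expr2.
move=> /(congr1 (fun x => x * (a * st a))) /= E.
have daQE x : x * d * a * Q = x * Q by rewrite -{2}daQ !mulrA.
have dasE x : x * d * a * st a = x * st a by rewrite -{2}MP_mul_adj !mulrA.
by rewrite !mulrA !dasE daQE -(mulrA d) -exprSr in E.
Qed.

End MoorePenrose.

Section SEP.
Variables (a d g : R).
Hypotheses (ad : is_MP_inverse st a d) (ag : is_group_inverse a g).

Lemma SEP_of_adj_eq_ginv : st a = g -> is_SEP st a d g.
Proof.
case: invst => stK [_ stM] sa; have gs : st g = a by rewrite -sa stK.
have [aga gag _] := ag.
suff gd : g = d by split; rewrite -?gd.
by apply: (MP_inverse_unique ad); split; rewrite // stM ?gs ?sa.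
Qed.

Lemma SEP_left_c_idempotent k : is_SEP st a d g ->
  left_c_idempotent ((d * a ^+ 2) ^+ k) ((a * st g * d) ^+ k).
Proof.
case: invst => stK _ [sa dg]; have gs : st g = a by rewrite -dg -sa stK.
by rewrite /left_c_idempotent gs dg ginv_mulKr // [a ^+ 2]expr2 mulrA ginv_mulKl // expr2.
Qed.

Lemma MP_mul_adj_ginv : d * a * st g = st g.
Proof.
by rewrite -(ginv_sqr_mulr (group_inverse_adjoint ag)) !mulrA MP_mul_adj.
Qed.

Lemma left_c_idempotent_expr_adj n :
  left_c_idempotent ((d * a ^+ 2) ^+ n.+2) ((a * st g * d) ^+ n.+2) ->
  a * st g ^+ (n.+2 + n.+1) = d * a ^+ n.+4 * st g ^+ n.+1.
Proof.
have sg := group_inverse_adjoint ag; have [ada _ _ _] := ad.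
rewrite expr_sandwich ?MP_mul_adj_ginv // expr_inner_inv_mul_sqr //.
move/left_c_idempotent_mulr_adj.
rewrite exprS mulrA MP_mul_adj_ginv -exprS => /(_ ad erefl) E.
by rewrite exprD mulrA -(ginv_exprS_mulr sg n) mulrA E -mulrA.
Qed.

Lemma mulr_adj_ginv_cancel {x y : R} :
  x * st g = y * st g -> x * (d * a) = y * (d * a).
Proof.
move=> E; rewrite -(adj_mul_adj_MP ad) -(ginv_mulKl (group_inverse_adjoint ag)).
by rewrite !mulrA E.
Qed.

Section IdempotentConditions.
Hypothesis idem2 : a * st g ^+ 3 = d * a ^+ 4 * st g.

Lemma sqr_mul_adj_ginv : a * st g ^+ 5 = d * a ^+ 5 * st g ^+ 2 ->
  a ^+ 2 * st g = a * st g ^+ 2.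
Proof.
move=> E3; set q := st g.
have A2 : a ^+ 2 * q ^+ 3 = a ^+ 4 * q by rewrite expr2 -mulrA idem2 MP_mull_expr.
have A3 : a ^+ 2 * q ^+ 5 = a ^+ 5 * q ^+ 2 by rewrite expr2 -mulrA E3 MP_mull_expr.
have A6 : a ^+ 5 * q ^+ 2 = a ^+ 5 * (a * q).
  rewrite -A3 (exprD q 3 2 : q ^+ 5 = _) mulrA A2 -(mulrA _ q) -exprS.
  rewrite (exprD a 2 2 : a ^+ 4 = _) -(mulrA (a ^+ 2)) A2 mulrA -exprD.
  by rewrite [in RHS]mulrA -exprSr.
by have := ginv_cancel_exprl ag A6; rewrite mulrA -expr2 => ->.
Qed.

Hypothesis sqr_mul_adj : a ^+ 2 * st g = a * st g ^+ 2.

Lemma MP_mul_sqr : d * a ^+ 2 = a.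
Proof.
have a3q : a ^+ 3 * st g = d * a ^+ 4 * st g.
  rewrite -idem2 (exprS a 2) -mulrA sqr_mul_adj mulrA -(expr2 a) [st g ^+ 2]expr2 mulrA.
  by rewrite sqr_mul_adj -mulrA -exprSr.
have a3E : a ^+ 3 = d * a ^+ 4.
  have := mulr_adj_ginv_cancel a3q.
  by rewrite !(MP_expr_mulr ad) -mulrA (MP_expr_mulr ad).
have := ginv_cancel_exprr ag (n := 2) (x := 1) (y := d * a).
by rewrite mul1r -mulrA -exprS -a3E mul1r -mulrA -expr2 => /(_ erefl) /esym.
Qed.

Lemma adj_eq_ginv : st a = g.
Proof.
case: invst => stK [_ stM]; have sg := group_inverse_adjoint ag.
have [ada _ _ da_herm] := ad.
have ag_da : a * g = d * a by rewrite -{1}MP_mul_sqr expr2 -mulrA ginv_mulKr.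
have aq : a * st g = st g ^+ 2.
  have := congr1 (fun x => d * x) sqr_mul_adj => /=.
  by rewrite (mulrA d (a ^+ 2)) (mulrA d a) MP_mul_sqr expr2 mulrA !MP_mul_adj_ginv.
have qs : st g * st a = d * a by rewrite -stM ag_da da_herm.
have qa : st g = a.
  by rewrite -[LHS](ginv_exprS_mulr sg 0) -aq -mulrA qs mulrA ada.
by rewrite -qa stK.
Qed.

End IdempotentConditions.

End SEP.
End Involution.

Theorem theorem4p3 (R : pzRingType) (st : R -> R) (a ad ag : R) :
  is_involution st ->
  is_MP_inverse st a ad ->
  is_group_inverse a ag ->
  (is_SEP st a ad ag <->
   (forall k : nat, (k = 2 \/ k = 3)%N ->
      left_c_idempotent ((ad * a ^+ 2) ^+ k) ((a * st ag * ad) ^+ k))).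
Proof.
move=> invst a_ad a_ag; split=> [sep k _|idem]; first exact: SEP_left_c_idempotent.
have E2 : a * st ag ^+ 3 = ad * a ^+ 4 * st ag :=
  left_c_idempotent_expr_adj invst a_ad a_ag 0 (idem 2%N (or_introl erefl)).
have E3 : a * st ag ^+ 5 = ad * a ^+ 5 * st ag ^+ 2 :=
  left_c_idempotent_expr_adj invst a_ad a_ag 1 (idem 3%N (or_intror erefl)).
have sqrE := sqr_mul_adj_ginv a_ad a_ag E2 E3.
exact (SEP_of_adj_eq_ginv invst a_ad a_ag (adj_eq_ginv invst a_ad a_ag E2 sqrE)).
Qed.
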